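(* Let $M=\langle S,A,P,R,s_\iota,\gamma\rangle$ be an MDP, $s^*_1,s^*_2\in S$, let $\mathcal{M}$ be the bisimulation metric RMDP constructed from $M$ and $s^*_1,s^*_2$, and let $d^*$ be the bisimulation metric of $M$ (see context). Then the optimal robust value function of $\mathcal{M}$ coincides with $d^*$, i.e. $\underline{V}^*_{\mathcal{M}}=d^*$, and in particular $\underline{V}^*_{\mathcal{M}}(s^*_1,s^*_2)=d^*(s^*_1,s^*_2)$.
   Context: An MDP $M=\langle S,A,P,R,s_\iota,\gamma\rangle$ has finite states $S$, finite actions $A$, transition function $P\colon S\times A\to\mathcal{D}(S)$, rewards $R\colon S\times A\to\mathbb{R}$, initial state $s_\iota$, discount $\gamma\in(0,1)$. A pseudometric on $S$ is $d\colon S\times S\to[0,\infty)$ with $d(x,x)=0$, symmetry and the triangle inequality; $\mathfrak{M}_S$ is the set of pseudometrics on $S$, ordered pointwise. For distributions $\mu,\nu$ on $S$, the set of couplings $\Lambda_{\mu,\nu}$ consists of $\vec\lambda\in\mathbb{R}_{\ge0}^{S\times S}$ with $\sum_{t'}\vec\lambda(t,t')=\mu(t)$, $\sum_t\vec\lambda(t,t')=\nu(t')$; the Kantorovich distance w.r.t. $d$ is $\mathfrak{D}_K(d)(\mu,\nu)=\min_{\vec\lambda\in\Lambda_{\mu,\nu}}\sum_{t,t'}\vec\lambda(t,t')d(t,t')$. Define $\mathfrak{F}_K\colon\mathfrak{M}_S\to\mathfrak{M}_S$ by $\mathfrak{F}_K(d)(s_1,s_2)=\max_{a\in A}(1-\gamma)|R(s_1,a)-R(s_2,a)|+\gamma\,\mathfrak{D}_K(d)(P(s_1,a),P(s_2,a))$;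 the bisimulation metric $d^*$ is the least fixed point of $\mathfrak{F}_K$. The bisimulation metric RMDP is $\mathcal{M}=\langle S\times S,A,\mathcal{U},\mathcal{R},\langle s^*_1,s^*_2\rangle,\gamma\rangle$, an $(s,a)$-rectangular RMDP with state space $S\times S$, uncertainty set $\mathcal{U}=\prod_{((s,s'),a)}\mathcal{U}_{((s,s'),a)}$ with $\mathcal{U}_{((s,s'),a)}=\Lambda_{P(s,a),P(s',a)}$ (a coupling is used as the distribution over successor pairs $(t,t')$), and reward $\mathcal{R}(\langle s,s'\rangle,a)=(1-\gamma)|R(s,a)-R(s',a)|$. For such an RMDP, the robust value of a policy $\pi$ from state $q$ is $\underline{V}^\pi(q)=\inf_{\vec u\in\mathcal{U}}\mathbb{E}_{\pi,P_{\vec u}}[\sum_{t\ge0}\gamma^t\mathcal{R}(q_t,a_t)\mid q_0=q]$ and $\underline{V}^*_{\mathcal{M}}(q)=\sup_\pi\underline{V}^\pi(q)$ over all policies. *)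

From HB Require Import structures.
From mathcomp Require Import all_boot all_order all_algebra.
From mathcomp Require Import all_classical all_reals all_analysis.
Set Implicit Arguments. Unset Strict Implicit. Unset Printing Implicit Defensive.
Import Order.TTheory GRing.Theory Num.Theory numFieldNormedType.Exports.
Local Open Scope classical_set_scope.
Local Open Scope ring_scope.

Section Bisim.
Variable R : realType.

Definition is_dist (T : finType) (mu : {ffun T -> R}) : Prop :=
  (forall t, 0 <= mu t) /\ \sum_(t : T) mu t = 1.

Definition is_pseudometric (S : finType) (d : S -> S -> R) : Prop :=
  (forall x y, 0 <= d x y) /\ (forall x, d x x = 0) /\
  (forall x y, d x y = d y x) /\ (forall x y z, d x z <= d x y + d y z).

Definition is_coupling (S : finType) (mu nu : {ffun S -> R})
    (lam : {ffun (S * S)%type -> R}) : Prop :=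
  (forall p, 0 <= lam p) /\
  (forall t, \sum_(t' : S) lam (t, t') = mu t) /\
  (forall t', \sum_(t : S) lam (t, t') = nu t').

Definition coupling_cost (S : finType) (d : S -> S -> R)
    (lam : {ffun (S * S)%type -> R}) : R :=
  \sum_(p : (S * S)%type) lam p * d p.1 p.2.

(* D_K(d)(mu,nu) = min over couplings (the min is attained; written as inf) *)
Definition kantorovich (S : finType) (d : S -> S -> R) (mu nu : {ffun S -> R}) : R :=
  inf [set c | exists lam, is_coupling mu nu lam /\ c = coupling_cost d lam].

Definition FK (S A : finType) (P : S -> A -> {ffun S -> R}) (Rw : S -> A -> R)
    (gamma : R) (d : S -> S -> R) : S -> S -> R :=
  fun s1 s2 => \big[Num.max/0]_(a : A)
     ((1 - gamma) * `|Rw s1 a - Rw s2 a| + gamma * kantorovich d (P s1 a) (P s2 a)).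

Definition is_bisim_metric (S A : finType) (P : S -> A -> {ffun S -> R})
    (Rw : S -> A -> R) (gamma : R) (d : S -> S -> R) : Prop :=
  is_pseudometric d /\ FK P Rw gamma d = d /\
  (forall d', is_pseudometric d' -> FK P Rw gamma d' = d' ->
     forall x y, d x y <= d' x y).

(* A general (history-dependent, randomised) policy: a distribution over actions
   given the history of past (state, action) pairs and the current state. *)
Definition policy (Q A : finType) := seq (Q * A) -> Q -> {ffun A -> R}.

Definition is_policy (Q A : finType) (pi : policy Q A) : Prop :=
  forall h q, is_dist (pi h q).

(* Expected discounted reward accumulated over the first n steps, from
   history h and current state q, under policy pi and transition function T:
   E[ sum_{t<n} gamma^t r(q_t,a_t) ] written out as nested finite sums. *)
Fixpoint horizon_value (Q A : finType) (T : Q -> A -> {ffun Q -> R})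
    (r : Q -> A -> R) (gamma : R) (pi : policy Q A) (n : nat)
    (h : seq (Q * A)) (q : Q) : R :=
  match n with
  | 0 => 0
  | n'.+1 => \sum_(a : A) pi h q a *
        (r q a + gamma * \sum_(q' : Q) T q a q' *
                 horizon_value T r gamma pi n' (rcons h (q, a)) q')
  end.

Definition disc_value (Q A : finType) (T : Q -> A -> {ffun Q -> R})
    (r : Q -> A -> R) (gamma : R) (pi : policy Q A) (q : Q) : R :=
  limn (fun n => horizon_value T r gamma pi n [::] q).

Definition bisim_reward (S A : finType) (Rw : S -> A -> R) (gamma : R)
    (q : (S * S)%type) (a : A) : R :=
  (1 - gamma) * `|Rw q.1 a - Rw q.2 a|.

(* u is an element of the (s,a)-rectangular uncertainty set U: for each
   ((s,s'),a), u ((s,s'),a) is a coupling of P(s,a) and P(s',a), used as the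
   distribution over successor pairs (t,t'). *)
Definition in_bisim_uncertainty (S A : finType) (P : S -> A -> {ffun S -> R})
    (u : (S * S)%type -> A -> {ffun (S * S)%type -> R}) : Prop :=
  forall q a, is_coupling (P q.1 a) (P q.2 a) (u q a).

Definition bisim_robust_value (S A : finType) (P : S -> A -> {ffun S -> R})
    (Rw : S -> A -> R) (gamma : R) (pi : policy (S * S)%type A)
    (q : (S * S)%type) : R :=
  inf [set v | exists u, in_bisim_uncertainty P u /\
                 v = disc_value u (bisim_reward Rw gamma) gamma pi q].

Definition bisim_opt_robust_value (S A : finType) (P : S -> A -> {ffun S -> R})
    (Rw : S -> A -> R) (gamma : R) (q : (S * S)%type) : R :=
  sup [set v | exists pi, is_policy pi /\ v = bisim_robust_value P Rw gamma pi q].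

End Bisim.

(* Let d be a nonnegative fixed point of F_K.  Whatever the policy, an
   adversary choosing at each pair q = (s, s') and action a a coupling whose
   d-cost is within (1 - gamma) eps of the Kantorovich distance keeps every
   horizon value below d q + eps, since d q dominates the one-step value of each
   action.  Conversely, the stationary policy playing an action that attains the
   maximum in F_K(d)(q) earns, against any admissible coupling, the reward plus
   gamma times a coupling cost bounded below by the Kantorovich distance, so its
   n-step value is at least d q - gamma^n max d.  Hence the optimal robust value
   equals every nonnegative fixed point of F_K; such fixed points are therefore
   unique, and a pseudometric one exists by a Knaster-Tarski argument, F_K
   preserving pseudometrics thanks to the gluing of couplings. *)

From HB Require Import structures.
From mathcomp Require Import all_boot all_order all_algebra.
From mathcomp Require Import all_classical all_reals all_analysis.
From mathcomp Require Import ring lra.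
Import Order.TTheory GRing.Theory Num.Theory numFieldNormedType.Exports.
Set Implicit Arguments. Unset Strict Implicit. Unset Printing Implicit Defensive.
Local Open Scope classical_set_scope.
Local Open Scope ring_scope.

Lemma ler_sum_term (R : numDomainType) (I : finType) (F : I -> R) j :
  (forall i, 0 <= F i) -> F j <= \sum_i F i.
Proof. by move=> F_ge0; rewrite (bigD1 j) //= lerDl sumr_ge0. Qed.

Lemma divfK_le (R : numFieldType) (a b : R) : 0 <= a -> a <= b -> a / b * b = a.
Proof.
move=> a_ge0 a_le_b; have [b0|b_neq0] := eqVneq b 0; last by rewrite divfK.
have -> : a = 0 by apply/le_anti; rewrite a_ge0 -b0 a_le_b.
by rewrite !mul0r.
Qed.

Section Couplings.
Variables (R : realType) (S : finType).
Implicit Types (mu nu : {ffun S -> R}) (lam : {ffun (S * S)%type -> R}).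

Lemma sum_pairE (F : (S * S)%type -> R) : \sum_p F p = \sum_t \sum_t' F (t, t').
Proof. by rewrite pair_bigA; apply: eq_bigr => -[]. Qed.

Lemma dist_mean_cst mu c : is_dist mu -> \sum_t mu t * c = c.
Proof. by case=> _ mu1; rewrite -mulr_suml mu1 mul1r. Qed.

Lemma dist_mean_le mu (F : S -> R) c :
  is_dist mu -> (forall t, F t <= c) -> \sum_t mu t * F t <= c.
Proof.
move=> mu_dist F_le; rewrite -[leRHS](dist_mean_cst c mu_dist).
by apply: ler_sum => t _; rewrite ler_wpM2l ?F_le //; case: mu_dist.
Qed.

Lemma coupling_dist mu nu lam : is_dist mu -> is_coupling mu nu lam -> is_dist lam.
Proof.
move=> [_ mu1] [lam_ge0 [lam_l _]]; split => //.
by rewrite sum_pairE -mu1; apply: eq_bigr => t _; exact: lam_l.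
Qed.

Lemma coupling_le_marginall mu nu lam t t' :
  is_coupling mu nu lam -> lam (t, t') <= mu t.
Proof.
by move=> [lam_ge0 [lam_l _]]; rewrite -lam_l (ler_sum_term (F := fun t' => lam (t, t'))).
Qed.

Lemma coupling_le_marginalr mu nu lam t t' :
  is_coupling mu nu lam -> lam (t, t') <= nu t'.
Proof.
by move=> [lam_ge0 [_ lam_r]]; rewrite -lam_r (ler_sum_term (F := fun t => lam (t, t'))).
Qed.

Definition product_coupling mu nu : {ffun (S * S)%type -> R} :=
  [ffun p => mu p.1 * nu p.2].

Lemma is_coupling_product mu nu :
  is_dist mu -> is_dist nu -> is_coupling mu nu (product_coupling mu nu).
Proof.
move=> [mu_ge0 mu1] [nu_ge0 nu1]; split; [|split].
- by move=> p; rewrite ffunE mulr_ge0.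
- by move=> t; under eq_bigr do rewrite ffunE /=; rewrite -mulr_sumr nu1 mulr1.
- by move=> t'; under eq_bigr do rewrite ffunE /=; rewrite -mulr_suml mu1 mul1r.
Qed.

Definition diag_coupling mu : {ffun (S * S)%type -> R} :=
  [ffun p => if p.1 == p.2 then mu p.1 else 0].

Lemma is_coupling_diag mu : is_dist mu -> is_coupling mu mu (diag_coupling mu).
Proof.
move=> [mu_ge0 _]; split; [|split].
- by move=> p; rewrite ffunE; case: ifP.
- move=> t; rewrite (bigD1 t) //= ffunE eqxx big1 ?addr0 // => t' t't.
  by rewrite ffunE /= eq_sym (negbTE t't).
- move=> t; rewrite (bigD1 t) //= ffunE eqxx big1 ?addr0 // => t' t't.
  by rewrite ffunE /= (negbTE t't).
Qed.

Lemma coupling_cost_diag (d : S -> S -> R) mu :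
  (forall x, d x x = 0) -> coupling_cost d (diag_coupling mu) = 0.
Proof.
move=> d_xx; apply: big1 => -[x y] _; rewrite ffunE /=.
by case: eqP => [->|_]; rewrite ?d_xx ?mulr0 ?mul0r.
Qed.

Definition swap_coupling lam : {ffun (S * S)%type -> R} := [ffun p => lam (p.2, p.1)].

Lemma is_coupling_swap mu nu lam :
  is_coupling mu nu lam -> is_coupling nu mu (swap_coupling lam).
Proof.
move=> [lam_ge0 [lam_l lam_r]]; split; [|split].
- by move=> p; rewrite ffunE.
- by move=> t; under eq_bigr do rewrite ffunE /=; rewrite lam_r.
- by move=> t; under eq_bigr do rewrite ffunE /=; rewrite lam_l.
Qed.

Lemma coupling_cost_swap (d : S -> S -> R) lam :
  (forall x y, d x y = d y x) -> coupling_cost d (swap_coupling lam) = coupling_cost d lam.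
Proof.
move=> d_sym; rewrite /coupling_cost !sum_pairE exchange_big /=.
by apply: eq_bigr => x _; apply: eq_bigr => y _; rewrite ffunE /= d_sym.
Qed.

Definition glue_coupling nu (l1 l2 : {ffun (S * S)%type -> R}) : {ffun (S * S)%type -> R} :=
  [ffun p => \sum_y l1 (p.1, y) * l2 (y, p.2) / nu y].

Section Gluing.
Variables (mu nu rho : {ffun S -> R}) (l1 l2 : {ffun (S * S)%type -> R}).
Hypotheses (l1_coupling : is_coupling mu nu l1) (l2_coupling : is_coupling nu rho l2).

Let nu_ge0 y : 0 <= nu y.
Proof. by rewrite -l1_coupling.2.2 sumr_ge0 // => x _; case: l1_coupling. Qed.

Let sum_glue_weightr x y : \sum_z l1 (x, y) * l2 (y, z) / nu y = l1 (x, y).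
Proof.
under eq_bigr do rewrite mulrAC; rewrite -mulr_sumr l2_coupling.2.1.
by rewrite divfK_le ?(coupling_le_marginalr _ _ l1_coupling) //; case: l1_coupling.
Qed.

Let sum_glue_weightl y z : \sum_x l1 (x, y) * l2 (y, z) / nu y = l2 (y, z).
Proof.
rewrite -!mulr_suml l1_coupling.2.2 (mulrC (nu y)) mulrAC.
by rewrite divfK_le ?(coupling_le_marginall _ _ l2_coupling) //; case: l2_coupling.
Qed.

Lemma is_coupling_glue : is_coupling mu rho (glue_coupling nu l1 l2).
Proof.
have [[l1_ge0 [l1_l _]] [l2_ge0 [_ l2_r]]] := (l1_coupling, l2_coupling).
split; [|split].
- by move=> p; rewrite ffunE; apply: sumr_ge0 => y _; rewrite divr_ge0 ?mulr_ge0.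
- move=> x; under eq_bigr do rewrite ffunE /=.
  by rewrite exchange_big -l1_l; apply: eq_bigr => y _; exact: sum_glue_weightr.
- move=> z; under eq_bigr do rewrite ffunE /=.
  by rewrite exchange_big -l2_r; apply: eq_bigr => y _; exact: sum_glue_weightl.
Qed.

Lemma coupling_cost_glue (d : S -> S -> R) :
  (forall x y, 0 <= d x y) -> (forall x y z, d x z <= d x y + d y z) ->
  coupling_cost d (glue_coupling nu l1 l2) <= coupling_cost d l1 + coupling_cost d l2.
Proof.
move=> d_ge0 d_tri.
have [[l1_ge0 _] [l2_ge0 _]] := (l1_coupling, l2_coupling).
set w := fun x y z => l1 (x, y) * l2 (y, z) / nu y.
have cost1 : \sum_x \sum_z \sum_y w x y z * d x y = coupling_cost d l1.
  rewrite /coupling_cost sum_pairE; apply: eq_bigr => x _; rewrite exchange_big.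
  by apply: eq_bigr => y _; rewrite -mulr_suml sum_glue_weightr.
have cost2 : \sum_x \sum_z \sum_y w x y z * d y z = coupling_cost d l2.
  rewrite /coupling_cost sum_pairE exchange_big /=.
  under eq_bigr do rewrite exchange_big /=.
  rewrite exchange_big /=; apply: eq_bigr => y _; apply: eq_bigr => z _.
  by rewrite -mulr_suml sum_glue_weightl.
rewrite -cost1 -cost2 /coupling_cost sum_pairE -big_split; apply: ler_sum => x _.
rewrite -big_split; apply: ler_sum => z _.
rewrite ffunE mulr_suml -big_split; apply: ler_sum => y _.
by rewrite /w /= -mulrDr ler_wpM2l ?divr_ge0 ?mulr_ge0.
Qed.

End Gluing.

End Couplings.

Section Kantorovich.
Variables (R : realType) (S : finType) (d : S -> S -> R).
Hypothesis d_ge0 : forall x y, 0 <= d x y.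
Implicit Types (mu nu rho : {ffun S -> R}) (lam : {ffun (S * S)%type -> R}).

Let costs mu nu := [set c | exists lam, is_coupling mu nu lam /\ c = coupling_cost d lam].

Lemma coupling_cost_ge0 lam : (forall p, 0 <= lam p) -> 0 <= coupling_cost d lam.
Proof. by move=> lam_ge0; apply: sumr_ge0 => p _; rewrite mulr_ge0. Qed.

Let costs_lbound mu nu : lbound (costs mu nu) 0.
Proof. by move=> c [lam [[lam_ge0 _] ->]]; exact: coupling_cost_ge0. Qed.

Let costs_neq0 mu nu : is_dist mu -> is_dist nu -> costs mu nu !=set0.
Proof. by move=> mu_dist nu_dist; eexists; exists (product_coupling mu nu); split; first exact: is_coupling_product. Qed.

Lemma kantorovich_le_cost mu nu lam :
  is_coupling mu nu lam -> kantorovich d mu nu <= coupling_cost d lam.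
Proof. by move=> lam_coupling; apply: ge_inf; [exists 0; exact: costs_lbound | exists lam]. Qed.

Lemma kantorovich_ge0 mu nu : is_dist mu -> is_dist nu -> 0 <= kantorovich d mu nu.
Proof. by move=> mu_dist nu_dist; apply: lb_le_inf; [exact: costs_neq0 | exact: costs_lbound]. Qed.

Lemma kantorovich_adherent mu nu eps : is_dist mu -> is_dist nu -> 0 < eps ->
  exists lam, is_coupling mu nu lam /\ coupling_cost d lam < kantorovich d mu nu + eps.
Proof.
move=> mu_dist nu_dist eps_gt0.
have [_ [lam [lam_coupling ->]] lam_lt] := inf_adherent eps_gt0
  (conj (costs_neq0 mu_dist nu_dist) (ex_intro _ 0 (@costs_lbound mu nu))).
by exists lam.
Qed.

Lemma le_kantorovich (d' : S -> S -> R) mu nu :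
  (forall x y, d x y <= d' x y) -> is_dist mu -> is_dist nu ->
  kantorovich d mu nu <= kantorovich d' mu nu.
Proof.
move=> le_dd' mu_dist nu_dist; apply: lb_le_inf.
  by eexists; exists (product_coupling mu nu); split; first exact: is_coupling_product.
move=> _ [lam [lam_coupling ->]]; apply: le_trans (kantorovich_le_cost lam_coupling) _.
by apply: ler_sum => p _; rewrite ler_wpM2l //; case: lam_coupling.
Qed.

Lemma kantorovich_le_ub C mu nu :
  (forall x y, d x y <= C) -> is_dist mu -> is_dist nu -> kantorovich d mu nu <= C.
Proof.
move=> d_le mu_dist nu_dist; have lam_coupling := is_coupling_product mu_dist nu_dist.
apply: le_trans (kantorovich_le_cost lam_coupling) _.
by apply: dist_mean_le => [|p]; [exact: coupling_dist lam_coupling | exact: d_le].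
Qed.

Lemma kantorovich_xx mu : (forall x, d x x = 0) -> is_dist mu -> kantorovich d mu mu = 0.
Proof.
move=> d_xx mu_dist; apply/le_anti; rewrite kantorovich_ge0 // andbT.
by rewrite -(coupling_cost_diag mu d_xx); exact/kantorovich_le_cost/is_coupling_diag.
Qed.

Lemma kantorovich_sym mu nu : (forall x y, d x y = d y x) ->
  is_dist mu -> is_dist nu -> kantorovich d mu nu = kantorovich d nu mu.
Proof.
move=> d_sym.
have le_swap mu' nu' : is_dist mu' -> is_dist nu' ->
    kantorovich d mu' nu' <= kantorovich d nu' mu'.
  move=> mu'_dist nu'_dist; apply: lb_le_inf; first exact: costs_neq0.
  move=> _ [lam [lam_coupling ->]]; rewrite -coupling_cost_swap //.
  exact/kantorovich_le_cost/is_coupling_swap.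
by move=> mu_dist nu_dist; apply/le_anti; rewrite !le_swap.
Qed.

Lemma kantorovich_triangle mu nu rho : (forall x y z, d x z <= d x y + d y z) ->
  is_dist mu -> is_dist nu -> is_dist rho ->
  kantorovich d mu rho <= kantorovich d mu nu + kantorovich d nu rho.
Proof.
move=> d_tri mu_dist nu_dist rho_dist; apply/ler_addgt0Pr => e e_gt0.
have e2_gt0 : 0 < e / 2 by rewrite divr_gt0.
have [l1 [l1_coupling l1_cost]] := kantorovich_adherent mu_dist nu_dist e2_gt0.
have [l2 [l2_coupling l2_cost]] := kantorovich_adherent nu_dist rho_dist e2_gt0.
apply: le_trans (kantorovich_le_cost (is_coupling_glue l1_coupling l2_coupling)) _.
apply: le_trans (coupling_cost_glue l1_coupling l2_coupling d_ge0 d_tri) _.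
rewrite [leRHS](_ : _ = kantorovich d mu nu + e / 2 + (kantorovich d nu rho + e / 2)).
  by rewrite lerD // ltW.
by field.
Qed.

End Kantorovich.

Section BisimOperator.
Variables (R : realType) (S A : finType) (P : S -> A -> {ffun S -> R})
  (Rw : S -> A -> R) (gamma : R).
Hypothesis P_dist : forall s a, is_dist (P s a).
Hypothesis gamma01 : 0 < gamma < 1.
Implicit Types (d : S -> S -> R).

Let gamma_ge0 : 0 <= gamma. Proof. by case/andP: gamma01 => /ltW. Qed.
Let gammaC_ge0 : 0 <= 1 - gamma. Proof. by case/andP: gamma01 => _ /ltW; rewrite subr_ge0. Qed.

Definition FK_term d x y a :=
  (1 - gamma) * `|Rw x a - Rw y a| + gamma * kantorovich d (P x a) (P y a).

Lemma FKE d x y : FK P Rw gamma d x y = \big[Num.max/0]_a FK_term d x y a.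
Proof. by []. Qed.

Lemma FK_ge0 d x y : 0 <= FK P Rw gamma d x y.
Proof. exact: bigmax_ge_id. Qed.

Lemma FK_term_le d x y a : FK_term d x y a <= FK P Rw gamma d x y.
Proof. exact: le_bigmax. Qed.

Lemma FK_term_ge0 d x y a : (forall x y, 0 <= d x y) -> 0 <= FK_term d x y a.
Proof. by move=> d_ge0; rewrite addr_ge0 ?mulr_ge0 ?kantorovich_ge0. Qed.

Lemma le_FK d d' x y : (forall x y, 0 <= d x y) -> (forall x y, d x y <= d' x y) ->
  FK P Rw gamma d x y <= FK P Rw gamma d' x y.
Proof.
move=> d_ge0 le_dd'; apply: le_bigmax2 => a _.
by rewrite lerD2l ler_wpM2l ?le_kantorovich.
Qed.

Lemma FK_pseudometric d : is_pseudometric d -> is_pseudometric (FK P Rw gamma d).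
Proof.
move=> [d_ge0 [d_xx [d_sym d_tri]]]; split; [|split; [|split]].
- exact: FK_ge0.
- move=> x; apply/le_anti; rewrite FK_ge0 andbT; apply: bigmax_le => // a _.
  by rewrite /FK_term subrr normr0 mulr0 add0r kantorovich_xx // mulr0.
- move=> x y; apply: eq_bigr => a _.
  by rewrite /FK_term distrC kantorovich_sym.
- move=> x y z; apply: bigmax_le => [|a _]; first by rewrite addr_ge0 ?FK_ge0.
  apply: le_trans (lerD (FK_term_le d x y a) (FK_term_le d y z a)).
  rewrite /FK_term addrACA -!mulrDr lerD ?ler_wpM2l ?ler_distD //.
  exact: kantorovich_triangle.
Qed.

Definition reward_gap :=
  \big[Num.max/0]_(p : (S * S * A)%type) `|Rw p.1.1 p.2 - Rw p.1.2 p.2|.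

Lemma FK_le_ub d C : (forall x y, 0 <= d x y) -> reward_gap <= C ->
  (forall x y, d x y <= C) -> forall x y, FK P Rw gamma d x y <= C.
Proof.
move=> d_ge0 gap_le d_le x y.
apply: bigmax_le => [|a _]; first exact: le_trans (bigmax_ge_id _ _ _ _) gap_le.
have gap_xya : `|Rw x a - Rw y a| <= C.
  exact: le_trans (le_bigmax _ (fun p : (S * S * A)%type => _) (x, y, a)) gap_le.
rewrite /FK_term [leRHS](_ : C = (1 - gamma) * C + gamma * C); last by ring.
by rewrite lerD ?ler_wpM2l ?kantorovich_le_ub.
Qed.

Definition bisim_postfix d := [/\ is_pseudometric d,
  forall x y, d x y <= reward_gap & forall x y, d x y <= FK P Rw gamma d x y].

(* Knaster-Tarski: the pointwise supremum of the bounded post-fixed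
   pseudometrics is again one, hence a fixed point. *)
Definition bisim_gfp x y := sup [set d x y | d in bisim_postfix].

Lemma bisim_postfix0 : bisim_postfix (fun _ _ => 0).
Proof.
split; last by move=> *; exact: FK_ge0.
- by split; [|split; [|split]] => // *; rewrite addr0.
- by move=> *; exact: bigmax_ge_id.
Qed.

Lemma le_bisim_gfp d x y : bisim_postfix d -> d x y <= bisim_gfp x y.
Proof.
move=> d_post; apply: ub_le_sup; last by exists d.
by exists reward_gap => _ [d' [_ d'_le _] <-].
Qed.

Lemma bisim_gfp_le x y c : (forall d, bisim_postfix d -> d x y <= c) -> bisim_gfp x y <= c.
Proof.
move=> le_c; apply: ge_sup => [|_ [d d_post <-]]; last exact: le_c.
by exists 0, (fun _ _ => 0); first exact: bisim_postfix0.
Qed.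

Lemma bisim_gfp_ge0 x y : 0 <= bisim_gfp x y.
Proof. exact: (le_bisim_gfp x y bisim_postfix0). Qed.

Lemma bisim_gfp_pseudometric : is_pseudometric bisim_gfp.
Proof.
split; [exact: bisim_gfp_ge0|split; [|split]].
- move=> x; apply/le_anti; rewrite bisim_gfp_ge0 andbT.
  by apply: bisim_gfp_le => d [[_ [d_xx _]] _ _]; rewrite d_xx.
- move=> x y; apply/le_anti; apply/andP; split; apply: bisim_gfp_le => d d_post;
    case: (d_post) => -[_ [_ [d_sym _]]] _ _; rewrite d_sym; exact: le_bisim_gfp.
- move=> x y z; apply: bisim_gfp_le => d d_post; case: (d_post) => -[_ [_ [_ d_tri]]] _ _.
  by apply: le_trans (d_tri x y z) _; rewrite lerD ?le_bisim_gfp.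
Qed.

Lemma bisim_gfp_le_FK x y : bisim_gfp x y <= FK P Rw gamma bisim_gfp x y.
Proof.
apply: bisim_gfp_le => d d_post; case: (d_post) => -[d_ge0 _] _ d_le_FK.
by apply: le_trans (d_le_FK x y) _; apply: le_FK => // u v; exact: le_bisim_gfp.
Qed.

Lemma bisim_gfp_fixpoint : FK P Rw gamma bisim_gfp = bisim_gfp.
Proof.
apply/funext => x; apply/funext => y; apply/le_anti; rewrite bisim_gfp_le_FK andbT.
apply: le_bisim_gfp; split.
- exact/FK_pseudometric/bisim_gfp_pseudometric.
- apply: FK_le_ub => //; first exact: bisim_gfp_ge0.
  by move=> u v; apply: bisim_gfp_le => d [].
- by move=> u v; apply: le_FK; [exact: bisim_gfp_ge0 | exact: bisim_gfp_le_FK].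
Qed.

End BisimOperator.

Section DiscountedValue.
Variables (R : realType) (Q A : finType) (T : Q -> A -> {ffun Q -> R})
  (r : Q -> A -> R) (gamma : R) (pi : policy R Q A).
Hypothesis T_dist : forall q a, is_dist (T q a).
Hypothesis pi_policy : is_policy pi.
Hypothesis r_ge0 : forall q a, 0 <= r q a.
Hypothesis gamma01 : 0 < gamma < 1.

Let gamma_ge0 : 0 <= gamma. Proof. by case/andP: gamma01 => /ltW. Qed.

Local Notation hv := (horizon_value T r gamma pi).

Lemma horizon_valueS n h q : hv n.+1 h q =
  \sum_a pi h q a * (r q a + gamma * \sum_q' T q a q' * hv n (rcons h (q, a)) q').
Proof. by []. Qed.

Let pi_ge0 h q a : 0 <= pi h q a. Proof. by case: (pi_policy h q). Qed.
Let T_ge0 q a q' : 0 <= T q a q'. Proof. by case: (T_dist q a). Qed.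

Lemma horizon_value_ge0 n h q : 0 <= hv n h q.
Proof.
elim: n h q => [//|n IH] h q; apply: sumr_ge0 => a _.
by rewrite mulr_ge0 ?addr_ge0 ?mulr_ge0 ?sumr_ge0 // => q' _; rewrite mulr_ge0.
Qed.

Lemma horizon_value_leS n h q : hv n h q <= hv n.+1 h q.
Proof.
elim: n h q => [|n IH] h q; first exact: horizon_value_ge0.
rewrite (horizon_valueS n.+1); apply: ler_sum => a _; rewrite ler_wpM2l ?lerD2l //.
by rewrite ler_wpM2l // ler_sum // => q' _; rewrite ler_wpM2l.
Qed.

Definition reward_max := \big[Num.max/0]_(p : (Q * A)%type) r p.1 p.2.

Lemma horizon_value_le n h q : hv n h q <= reward_max / (1 - gamma).
Proof.
have gammaC_gt0 : 0 < 1 - gamma by case/andP: gamma01 => _; rewrite subr_gt0.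
have rmax_ge0 : 0 <= reward_max by exact: bigmax_ge_id.
elim: n h q => [|n IH] h q; first by rewrite /= divr_ge0 // ltW.
apply: dist_mean_le => [|a]; first exact: pi_policy.
have r_le : r q a <= reward_max by exact: (le_bigmax _ (fun p : (Q * A)%type => _) (q, a)).
apply: le_trans (lerD r_le (ler_wpM2l gamma_ge0 (dist_mean_le (T_dist q a) (IH _)))) _.
by rewrite le_eqVlt; apply/orP; left; apply/eqP; field; rewrite gt_eqF.
Qed.

Lemma horizon_value_cvg q : cvgn (fun n => hv n [::] q).
Proof.
apply: nondecreasing_is_cvgn; first by apply/nondecreasing_seqP => n; exact: horizon_value_leS.
by exists (reward_max / (1 - gamma)) => _ [n _ <-]; exact: horizon_value_le.
Qed.

Lemma disc_value_ge0 q : 0 <= disc_value T r gamma pi q.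
Proof.
by apply: limr_ge; [exact: horizon_value_cvg | apply: nearW => n; exact: horizon_value_ge0].
Qed.

Lemma disc_value_le q c : (forall n, hv n [::] q <= c) -> disc_value T r gamma pi q <= c.
Proof. by move=> hv_le; apply: limr_le; [exact: horizon_value_cvg | exact: nearW]. Qed.

Lemma disc_value_ge q c M : (forall n, c - gamma ^+ n * M <= hv n [::] q) ->
  c <= disc_value T r gamma pi q.
Proof.
move=> le_hv.
have lower_cvg : c - gamma ^+ n * M @[n --> \oo] --> c.
  rewrite -[X in _ --> X]subr0; apply: cvgB; first exact: cvg_cst.
  rewrite -(mul0r M); apply: cvgMl; apply: cvg_expr.
  by rewrite ger0_norm //; case/andP: gamma01.
rewrite -(cvg_lim _ lower_cvg) //; apply: ler_lim; last exact: nearW.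
- by apply/cvg_ex; exists c.
- exact: horizon_value_cvg.
Qed.

End DiscountedValue.

Section PurePolicy.
Variables (R : realType) (Q A : finType) (f : Q -> A).

Definition pure_policy : policy R Q A := fun _ q => [ffun a => (a == f q)%:R].

Lemma is_policy_pure : is_policy pure_policy.
Proof.
move=> h q; split; first by move=> a; rewrite ffunE ler0n.
rewrite (bigD1 (f q)) //= ffunE eqxx big1 ?addr0 // => a a_neq.
by rewrite ffunE (negbTE a_neq).
Qed.

Lemma pure_policy_mean h q (F : A -> R) : \sum_a pure_policy h q a * F a = F (f q).
Proof.
rewrite (bigD1 (f q)) //= ffunE eqxx mul1r big1 ?addr0 // => a a_neq.
by rewrite ffunE (negbTE a_neq) mul0r.
Qed.

End PurePolicy.

Section BisimRMDP.
Variables (R : realType) (S A : finType) (P : S -> A -> {ffun S -> R})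
  (Rw : S -> A -> R) (gamma : R).
Hypothesis P_dist : forall s a, is_dist (P s a).
Hypothesis gamma01 : 0 < gamma < 1.

Let gamma_ge0 : 0 <= gamma. Proof. by case/andP: gamma01 => /ltW. Qed.
Let gammaC_gt0 : 0 < 1 - gamma. Proof. by case/andP: gamma01 => _; rewrite subr_gt0. Qed.

Local Notation Q := (S * S)%type.
Local Notation r := (bisim_reward Rw gamma).
Local Notation hv u pi := (horizon_value u r gamma pi).

Lemma bisim_reward_ge0 q a : 0 <= r q a.
Proof. by rewrite mulr_ge0 // ltW. Qed.

Lemma bisim_uncertainty_dist u :
  in_bisim_uncertainty P u -> forall q a, is_dist (u q a).
Proof. by move=> u_unc q a; exact: coupling_dist (P_dist q.1 a) (u_unc q a). Qed.

Lemma bisim_robust_value_le_disc pi u q : is_policy pi -> in_bisim_uncertainty P u ->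
  bisim_robust_value P Rw gamma pi q <= disc_value u r gamma pi q.
Proof.
move=> pi_policy u_unc; apply: ge_inf; last by exists u.
exists 0 => _ [u' [u'_unc ->]].
exact: disc_value_ge0 (bisim_uncertainty_dist u'_unc) pi_policy bisim_reward_ge0 gamma01 q.
Qed.

Lemma bisim_robust_value_ge pi q c : is_policy pi ->
  (forall u, in_bisim_uncertainty P u -> c <= disc_value u r gamma pi q) ->
  c <= bisim_robust_value P Rw gamma pi q.
Proof.
move=> pi_policy le_disc; apply: lb_le_inf => [|_ [u [u_unc ->]]]; last exact: le_disc.
pose u q a := product_coupling (P q.1 a) (P q.2 a).
by exists (disc_value u r gamma pi q), u; split=> // q' a; exact: is_coupling_product.
Qed.

Variable d : S -> S -> R.
Hypothesis d_ge0 : forall x y, 0 <= d x y.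
Hypothesis d_fix : FK P Rw gamma d = d.

Lemma FK_term_le_fixpoint x y a : FK_term P Rw gamma d x y a <= d x y.
Proof. by have := FK_term_le P Rw gamma d x y a; rewrite d_fix. Qed.

Lemma horizon_value_le_fixpoint pi u c : is_policy pi -> in_bisim_uncertainty P u ->
  0 <= c ->
  (forall q a, coupling_cost d (u q a) <= kantorovich d (P q.1 a) (P q.2 a) + (1 - gamma) * c) ->
  forall n h q, hv u pi n h q <= d q.1 q.2 + c.
Proof.
move=> pi_policy u_unc c_ge0 u_cost; have u_dist := bisim_uncertainty_dist u_unc.
elim=> [|n IH] h q; first by rewrite addr_ge0.
apply: dist_mean_le => [|a]; first exact: pi_policy.
have next_le : \sum_q' u q a q' * hv u pi n (rcons h (q, a)) q' <= coupling_cost d (u q a) + c.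
  apply: le_trans (_ : \sum_q' u q a q' * (d q'.1 q'.2 + c) <= _).
    by apply: ler_sum => q' _; rewrite ler_wpM2l ?IH //; case: (u_dist q a).
  by under eq_bigr do rewrite mulrDr; rewrite big_split /= dist_mean_cst.
have := FK_term_le_fixpoint q.1 q.2 a; rewrite /FK_term /bisim_reward.
set K := kantorovich _ _ _; set X := \sum_q' _ in next_le *.
have := ler_wpM2l gamma_ge0 (le_trans next_le (lerD (u_cost q a) (lexx c))).
(* gamma * ((1 - gamma) * c + c) = c - (1 - gamma) ^+ 2 * c *)
have : 0 <= (1 - gamma) ^+ 2 * c by rewrite mulr_ge0 ?sqr_ge0.
nra.
Qed.

Lemma bisim_robust_value_le pi q : is_policy pi -> bisim_robust_value P Rw gamma pi q <= d q.1 q.2.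
Proof.
move=> pi_policy; apply/ler_addgt0Pr => c c_gt0.
have eps_gt0 : 0 < (1 - gamma) * c by rewrite mulr_gt0.
have /choice[lam lam_opt] : forall qa : Q * A, exists l,
    is_coupling (P qa.1.1 qa.2) (P qa.1.2 qa.2) l /\
    coupling_cost d l < kantorovich d (P qa.1.1 qa.2) (P qa.1.2 qa.2) + (1 - gamma) * c.
  by move=> qa; exact: kantorovich_adherent.
pose u q a := lam (q, a).
have u_unc : in_bisim_uncertainty P u by move=> q' a; exact: (lam_opt (q', a)).1.
apply: le_trans (bisim_robust_value_le_disc q pi_policy u_unc) _.
apply: (disc_value_le (bisim_uncertainty_dist u_unc) pi_policy bisim_reward_ge0 gamma01) => n.
apply: horizon_value_le_fixpoint => // [|q' a]; first exact: ltW.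
exact/ltW/(lam_opt (q', a)).2.
Qed.

Section Greedy.
Variable a0 : A.

Definition greedy_action (q : Q) := [arg max_(a > a0) FK_term P Rw gamma d q.1 q.2 a]%O.

Local Notation greedy := (pure_policy R greedy_action).

Lemma fixpoint_greedy q : d q.1 q.2 = FK_term P Rw gamma d q.1 q.2 (greedy_action q).
Proof.
rewrite -{1}d_fix FKE (bigmax_eq_arg _ a0) // => a _.
exact: FK_term_ge0.
Qed.

Let dmax := \big[Num.max/0]_(q : Q) d q.1 q.2.

Lemma horizon_value_greedy_ge u n h q : in_bisim_uncertainty P u ->
  d q.1 q.2 - gamma ^+ n * dmax <= hv u greedy n h q.
Proof.
move=> u_unc; have u_dist := bisim_uncertainty_dist u_unc.
elim: n h q => [|n IH] h q.
  by rewrite expr0 mul1r subr_le0 (le_bigmax _ (fun q : Q => d q.1 q.2) q).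
rewrite horizon_valueS pure_policy_mean; set a := greedy_action q.
have next_ge : coupling_cost d (u q a) - gamma ^+ n * dmax <=
    \sum_q' u q a q' * hv u greedy n (rcons h (q, a)) q'.
  apply: le_trans (_ : \sum_q' u q a q' * (d q'.1 q'.2 - gamma ^+ n * dmax) <= _).
    by under eq_bigr do rewrite mulrBr; rewrite sumrB dist_mean_cst.
  by apply: ler_sum => q' _; rewrite ler_wpM2l ?IH //; case: (u_dist q a).
rewrite {1}fixpoint_greedy /FK_term exprS -mulrA -addrA -mulrBr lerD2l ler_wpM2l //.
by apply: le_trans next_ge; rewrite lerD2r kantorovich_le_cost.
Qed.

Lemma bisim_robust_value_greedy_ge q : d q.1 q.2 <= bisim_robust_value P Rw gamma greedy q.
Proof.
apply: bisim_robust_value_ge => [|u u_unc]; first exact: is_policy_pure.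
apply: (disc_value_ge (bisim_uncertainty_dist u_unc) (is_policy_pure R greedy_action)
  bisim_reward_ge0 gamma01 (M := dmax)) => n.
exact: horizon_value_greedy_ge.
Qed.

End Greedy.

Lemma bisim_opt_robust_value_le q : bisim_opt_robust_value P Rw gamma q <= d q.1 q.2.
Proof.
rewrite /bisim_opt_robust_value; set E := [set v | _].
have [E_neq0|E0] := pselect (E !=set0).
  by apply: ge_sup => // _ [pi [pi_policy ->]]; exact: bisim_robust_value_le.
by rewrite (_ : E = set0) ?sup0 //; apply/seteqP; split => // v Ev; apply: E0; exists v.
Qed.

Lemma bisim_opt_robust_value_ge q : d q.1 q.2 <= bisim_opt_robust_value P Rw gamma q.
Proof.
rewrite /bisim_opt_robust_value; set E := [set v | _].
have [a0 _|A0] := pickP (fun _ : A => true).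
  apply: le_trans (bisim_robust_value_greedy_ge a0 q) _.
  apply: ub_le_sup; last by exists (pure_policy R (greedy_action a0)); split; first exact: is_policy_pure.
  by exists (d q.1 q.2) => _ [pi [pi_policy ->]]; exact: bisim_robust_value_le.
(* Without actions there is no policy, and both sides vanish. *)
have -> : d q.1 q.2 = 0 by rewrite -d_fix FKE big_pred0.
rewrite (_ : E = set0) ?sup0 //; apply/seteqP; split => // v [pi [pi_policy _]].
by have := (pi_policy [::] q).2; rewrite big_pred0 // => /eqP; rewrite eq_sym oner_eq0.
Qed.

Lemma bisim_opt_robust_value_fixpoint q : bisim_opt_robust_value P Rw gamma q = d q.1 q.2.
Proof. by apply/le_anti; rewrite bisim_opt_robust_value_le bisim_opt_robust_value_ge. Qed.

End BisimRMDP.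

Theorem theorem19 (R : realType) (S A : finType)
    (P : S -> A -> {ffun S -> R}) (Rw : S -> A -> R) (s_init : S) (gamma : R)
    (s1 s2 : S)
    (hP : forall s a, is_dist (P s a))
    (hgamma : 0 < gamma < 1) :
  let Vstar := bisim_opt_robust_value P Rw gamma in
  is_bisim_metric P Rw gamma (fun x y => Vstar (x, y)) /\
  (forall d, is_bisim_metric P Rw gamma d ->
     (forall x y, Vstar (x, y) = d x y) /\ Vstar (s1, s2) = d s1 s2).
Proof.
move=> Vstar.
have Vstar_fixpoint d : is_pseudometric d -> FK P Rw gamma d = d ->
    forall x y, Vstar (x, y) = d x y.
  by move=> [d_ge0 _] d_fix x y; exact: (bisim_opt_robust_value_fixpoint hP hgamma d_ge0 d_fix (x, y)).
have gfp_pm := bisim_gfp_pseudometric P Rw gamma.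
have gfp_fix := bisim_gfp_fixpoint Rw hP hgamma.
have -> : (fun x y => Vstar (x, y)) = bisim_gfp P Rw gamma.
  by apply/funext => x; apply/funext => y; exact: Vstar_fixpoint.
split.
  split=> //; split=> // d d_pm d_fix x y.
  by rewrite -(Vstar_fixpoint _ gfp_pm gfp_fix) (Vstar_fixpoint _ d_pm d_fix).
move=> d [d_pm [d_fix _]]; have Vstar_d := Vstar_fixpoint _ d_pm d_fix.
by split; [exact: Vstar_d | exact: Vstar_d].
Qed.
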